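(* Let $D$ be a fixed integer which is not a perfect square and let $\mathcal{Q}$ denote the set of squares in $\mathbb{Q}$. For every $\varepsilon>0$ and $N\geq 1$, \[ \#\{(A,B)\in\mathbb{Z}^2:\ |A|,|B|\leq N,\ -AB\in\mathcal{Q}\}\ll_\varepsilon N^{1+\varepsilon}, \] and \[ \#\{(A,B)\in\mathbb{Z}^2:\ |A|,|B|\leq N,\ D\big((A+B-1)^2-4AB\big)\in\mathcal{Q}\}\ll_\varepsilon |D|^{\varepsilon}N^{1+\varepsilon}. \] *)

From Stdlib Require Import ZArith QArith Reals List ClassicalEpsilon.
Import ListNotations.

Definition is_rat_square (x : Z) : Prop :=
  exists q : Q, Qeq (q * q) (inject_Z x).

Definition is_int_square (D : Z) : Prop := exists k : Z, (k * k)%Z = D.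

Definition Zrange (N : nat) : list Z :=
  map (fun k => (Z.of_nat k - Z.of_nat N)%Z) (seq 0 (2 * N + 1)).

Definition box (N : nat) : list (Z * Z) := list_prod (Zrange N) (Zrange N).

Definition decP (P : Prop) : bool :=
  if excluded_middle_informative P then true else false.

Definition count_box (N : nat) (P : Z -> Z -> Prop) : nat :=
  length (filter (fun p => decP (P (fst p) (snd p))) (box N)).

(* If [D n] is a square in Q it is a square in Z, and then [n = s t^2] with [s] depending
   only on [D] ([r^2 = D s] for the least [r > 0] with [D | r^2]).
   For [-AB] a nonzero square this gives [|A| = s c^2], [|B| = s t^2] with [c, t <= sqrt (N/s)],
   so there are at most [2 sum_(s <= N) N/s << N log N] such pairs.
   Since [(A + B - 1)^2 - 4AB = (A - B)^2 - 2(A + B) + 1 = s t^2], the pair [(A, B)] is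
   determined by [x = A - B] and [t], which satisfy [|x^2 - s t^2| <= 4N + 1]; for fixed
   [x <> 0] two such [t] differ by at most [3(4N + 1)/|x|], giving again [<< N log N] pairs,
   uniformly in [D].  Finally [N log N <= N^(1+eps)/eps]. *)

From Stdlib Require Import ZArith QArith Reals List Lia Lra Classical ClassicalEpsilon.
Import ListNotations.

Open Scope Z_scope.

(** * Squares in Z and Q *)

Lemma Z_divide_of_square_divide a b : (a * a | b * b) -> (a | b).
Proof.
  intros Hab.
  destruct (Z.eq_dec a 0) as [->|Ha].
  { destruct Hab as [q Hq]. replace b with 0 by nia. apply Z.divide_refl. }
  set (g := Z.gcd a b).
  assert (Hg : 0 < g).
  { pose proof (Z.gcd_nonneg a b). pose proof (Z.gcd_eq_0_l a b). unfold g; lia. }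
  destruct (Z.gcd_divide_l a b) as [a' Ea]; destruct (Z.gcd_divide_r a b) as [b' Eb].
  fold g in Ea, Eb.
  assert (Hcop : Z.gcd a' b' = 1).
  { rewrite <- (Z.gcd_div_gcd a b g ltac:(lia) eq_refl), Ea, Eb, !Z.div_mul by lia.
    reflexivity. }
  assert (Hsq : (a' * a' | b' * b')).
  { apply (Z.mul_divide_cancel_r _ _ (g * g)); [lia|].
    replace (a' * a' * (g * g)) with (a * a) by (rewrite Ea; ring).
    replace (b' * b' * (g * g)) with (b * b) by (rewrite Eb; ring). exact Hab. }
  assert (Ha' : (a' | b')).
  { apply (Z.gauss _ b'); [|exact Hcop].
    eapply Z.divide_trans; [apply Z.divide_factor_l|exact Hsq]. }
  rewrite Ea, Eb. apply Z.mul_divide_mono_r, Ha'.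
Qed.

Lemma Z_divide_mul_of_divide_squares D a b :
  (D | a * a) -> (D | b * b) -> (D | a * b).
Proof.
  intros [p Hp] [q Hq]. apply Z_divide_of_square_divide. exists (p * q).
  replace (a * b * (a * b)) with (a * a * (b * b)) by ring. rewrite Hp, Hq. ring.
Qed.

Lemma Z_least_positive (P : Z -> Prop) n : 0 < n -> P n ->
  exists r, 0 < r /\ P r /\ forall m, 0 < m -> P m -> r <= m.
Proof.
  intros Hn. assert (Hn0 : 0 <= n) by lia. revert Hn.
  pattern n. apply Z_lt_induction; [|exact Hn0].
  intros x IH Hx Px.
  destruct (classic (exists y, 0 < y < x /\ P y)) as [[y [Hy Py]]|Hnone].
  - apply (IH y); [lia|lia|exact Py].
  - exists x. repeat split; [lia|exact Px|].
    intros m Hm Pm. apply Z.nlt_ge. intros Hmx. apply Hnone. exists m. auto.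
Qed.

(* The [m] with [D | m^2] form an ideal of Z; [r] is its positive generator. *)
Lemma square_divisor_root D : D <> 0 ->
  exists r, 0 < r /\ (D | r * r) /\ forall m, (D | m * m) -> (r | m).
Proof.
  intros HD.
  assert (HabsD : (D | Z.abs D * Z.abs D)) by (rewrite Z.abs_square; apply Z.divide_factor_l).
  destruct (Z_least_positive (fun r => (D | r * r)) (Z.abs D) ltac:(lia) HabsD)
    as [r [Hr [Hrr Hleast]]].
  exists r. repeat split; [lia|exact Hrr|].
  intros m Hm.
  pose proof (Z.mod_pos_bound m r Hr) as Hbound.
  pose proof (Z.div_mod m r ltac:(lia)) as Hdiv.
  assert (Hmod : (D | m mod r * (m mod r))).
  { replace (m mod r * (m mod r))
      with (m * m - 2 * (m / r) * (m * r) + (m / r) * (m / r) * (r * r)) by lia.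
    apply Z.divide_add_r; [apply Z.divide_sub_r|]; [exact Hm| |];
      apply Z.divide_mul_r; [apply Z_divide_mul_of_divide_squares|]; assumption. }
  apply Z.mod_divide; [lia|].
  destruct (Z.eq_dec (m mod r) 0) as [E|E]; [exact E|].
  specialize (Hleast (m mod r) ltac:(lia) Hmod). lia.
Qed.

Lemma mul_square_form D : D <> 0 ->
  exists s, s <> 0 /\
    forall n e, D * n = e * e -> exists t, 0 <= t /\ n = s * (t * t).
Proof.
  intros HD.
  destruct (square_divisor_root D HD) as [r [Hr [[s Hs] Hroot]]].
  exists s. split; [intros ->; lia|].
  intros n e Hn.
  destruct (Hroot e ltac:(exists n; lia)) as [t Ht].
  exists (Z.abs t). split; [lia|].
  apply (Z.mul_cancel_l _ _ D HD).
  rewrite Hn, Ht, Z.abs_square.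
  transitivity (t * t * (r * r)); [ring|]. rewrite Hs. ring.
Qed.

Lemma int_square_of_rat_square n : is_rat_square n -> exists e, e * e = n.
Proof.
  intros [[p d] Hq]. unfold Qeq in Hq. cbn in Hq. rewrite Pos2Z.inj_mul in Hq.
  destruct (Z_divide_of_square_divide (Z.pos d) p) as [e ->]; [exists n; lia|].
  exists e. apply (Z.mul_cancel_r _ _ (Z.pos d * Z.pos d)); lia.
Qed.

Lemma pos_mul_square_form a b e : 0 < a -> 0 < b -> a * b = e * e ->
  exists s c t, 0 < s /\ 0 < c /\ 0 < t /\ a = s * (c * c) /\ b = s * (t * t).
Proof.
  intros Ha Hb Hab.
  destruct (mul_square_form a ltac:(lia)) as [s [Hs Hform]].
  destruct (Hform a a eq_refl) as [c [Hc Ea]].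
  destruct (Hform b e Hab) as [t [Ht Eb]].
  exists s, c, t. repeat split; try assumption; nia.
Qed.

(** * Counting by injections *)

Lemma length_le_of_injective_rel {A B : Type} (R : A -> B -> Prop) (L : list B) (l : list A) :
  (forall a a' b, R a b -> R a' b -> a = a') -> NoDup l ->
  (forall a, In a l -> exists b, In b L /\ R a b) -> (length l <= length L)%nat.
Proof.
  intros Hinj Hl Hcov.
  destruct l as [|a0 l0]; [cbn; lia|].
  destruct (Hcov a0 (or_introl eq_refl)) as [b0 _].
  set (f a := epsilon (inhabits b0) (fun b => In b L /\ R a b)).
  assert (Hf : forall a, In a (a0 :: l0) -> In (f a) L /\ R a (f a))
    by (intros a Ha; apply epsilon_spec, Hcov, Ha).
  rewrite <- (length_map f). apply NoDup_incl_length.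
  - apply NoDup_map_NoDup_ForallPairs; [|exact Hl].
    intros x y Hx Hy E. apply (Hinj x y (f x)); [|rewrite E]; apply Hf; assumption.
  - intros b Hb. apply in_map_iff in Hb as [a [<- Ha]]. apply Hf, Ha.
Qed.

Lemma NoDup_list_prod {A B : Type} (l : list A) (l' : list B) :
  NoDup l -> NoDup l' -> NoDup (list_prod l l').
Proof.
  induction 1 as [|a l Hnotin Hl IH]; intros Hl'; cbn; [constructor|].
  apply NoDup_app; [|apply IH, Hl'|].
  - apply NoDup_map_NoDup_ForallPairs; [|exact Hl'].
    intros x y _ _ E. injection E. easy.
  - intros [x y] Hx Hy. apply in_map_iff in Hx as [z [E _]]. injection E as <- <-.
    apply in_prod_iff in Hy as [Ha _]. contradiction.
Qed.

Lemma in_Zrange N z : In z (Zrange N) <-> Z.abs z <= Z.of_nat N.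
Proof.
  unfold Zrange. rewrite in_map_iff. split.
  - intros [k [<- Hk]]. apply in_seq in Hk. lia.
  - intros H. exists (Z.to_nat (z + Z.of_nat N)). rewrite in_seq. lia.
Qed.

Lemma NoDup_box N : NoDup (box N).
Proof.
  assert (H : NoDup (Zrange N)).
  { apply NoDup_map_NoDup_ForallPairs; [|apply seq_NoDup]. intros x y _ _ E. lia. }
  apply NoDup_list_prod; exact H.
Qed.

Lemma in_box N A B : In (A, B) (box N) <-> Z.abs A <= Z.of_nat N /\ Z.abs B <= Z.of_nat N.
Proof. unfold box. rewrite in_prod_iff, !in_Zrange. reflexivity. Qed.

Lemma count_box_le {T : Type} N (P : Z -> Z -> Prop) (R : Z * Z -> T -> Prop) (L : list T) :
  (forall a a' b, R a b -> R a' b -> a = a') ->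
  (forall A B, Z.abs A <= Z.of_nat N -> Z.abs B <= Z.of_nat N -> P A B ->
     exists b, In b L /\ R (A, B) b) ->
  (count_box N P <= length L)%nat.
Proof.
  intros Hinj Hcov. apply (length_le_of_injective_rel R); [exact Hinj| |].
  - apply NoDup_filter, NoDup_box.
  - intros [A B] HAB. apply filter_In in HAB as [Hbox HP]. apply in_box in Hbox.
    unfold decP in HP. destruct (excluded_middle_informative _); [|discriminate].
    apply Hcov; tauto.
Qed.

Definition Zseq (lo : Z) (n : nat) : list Z := map (fun i => lo + Z.of_nat i) (seq 0 n).

Lemma length_Zseq lo n : length (Zseq lo n) = n.
Proof. unfold Zseq. rewrite length_map, length_seq. reflexivity. Qed.

Lemma in_Zseq lo n t : In t (Zseq lo n) <-> lo <= t < lo + Z.of_nat n.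
Proof.
  unfold Zseq. rewrite in_map_iff. split.
  - intros [k [<- Hk]]. apply in_seq in Hk. lia.
  - intros H. exists (Z.to_nat (t - lo)). rewrite in_seq. lia.
Qed.

Lemma Zseq_S lo n : Zseq lo (S n) = Zseq lo n ++ [lo + Z.of_nat n].
Proof. unfold Zseq. rewrite seq_S, map_app. reflexivity. Qed.
(** * Harmonic sums and powers *)

Open Scope R_scope.

Definition Rsum {A : Type} (l : list A) (g : A -> R) : R :=
  fold_right (fun a acc => g a + acc) 0 l.

Lemma Rsum_cons {A : Type} (a : A) l g : Rsum (a :: l) g = g a + Rsum l g.
Proof. reflexivity. Qed.

Lemma Rsum_app {A : Type} (l1 l2 : list A) g : Rsum (l1 ++ l2) g = Rsum l1 g + Rsum l2 g.
Proof.
  induction l1 as [|a l1 IH]; cbn [app]; [cbn; lra|]. rewrite !Rsum_cons, IH. lra.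
Qed.

Lemma Rsum_flat_map {A B : Type} (l : list A) (h : A -> list B) g :
  Rsum (flat_map h l) g = Rsum l (fun a => Rsum (h a) g).
Proof.
  induction l as [|a l IH]; cbn [flat_map]; [reflexivity|].
  rewrite Rsum_app, !Rsum_cons, IH. reflexivity.
Qed.

Lemma Rsum_le {A : Type} (l : list A) g h :
  (forall x, In x l -> g x <= h x) -> Rsum l g <= Rsum l h.
Proof.
  induction l as [|a l IH]; intros Hle; [apply Rle_refl|]. rewrite !Rsum_cons.
  apply Rplus_le_compat; [apply Hle; left; reflexivity|apply IH; intros; apply Hle; right; auto].
Qed.

Lemma Rsum_affine {A : Type} (l : list A) g a b :
  Rsum l (fun x => a * g x + b) = a * Rsum l g + b * INR (length l).
Proof.
  induction l as [|x l IH]; [cbn; lra|].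
  rewrite !Rsum_cons, IH. cbn [length]. rewrite S_INR. lra.
Qed.

Lemma length_flat_map_le {A B : Type} (l : list A) (f : A -> list B) (g : A -> R) :
  (forall a, In a l -> INR (length (f a)) <= g a) -> INR (length (flat_map f l)) <= Rsum l g.
Proof.
  induction l as [|a l IH]; intros Hle; [cbn; lra|].
  cbn [flat_map]. rewrite length_app, plus_INR, Rsum_cons.
  apply Rplus_le_compat; [apply Hle; left; reflexivity|apply IH; intros; apply Hle; right; auto].
Qed.

Lemma inv_succ_le_ln_sub n : 1 <= n -> / (n + 1) <= ln (n + 1) - ln n.
Proof.
  intros Hn.
  assert (Hq : 0 < n / (n + 1)) by (apply Rdiv_lt_0_compat; lra).
  pose proof (exp_ineq1_le (ln (n / (n + 1)))) as Hexp. rewrite exp_ln in Hexp by exact Hq.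
  unfold Rdiv in Hexp at 1. rewrite ln_mult, ln_Rinv in Hexp
    by (try apply Rinv_0_lt_compat; lra).
  replace (n / (n + 1)) with (1 - / (n + 1)) in Hexp by (field; lra). lra.
Qed.

Lemma harmonic_le_ln n : (1 <= n)%nat -> Rsum (Zseq 1 n) (fun j => / IZR j) <= 1 + ln (INR n).
Proof.
  induction n as [|n IH]; intros Hn; [lia|].
  destruct (Nat.eq_dec n 0) as [->|Hn0]; [cbn; rewrite ln_1; lra|].
  rewrite Zseq_S, Rsum_app, S_INR, Rsum_cons. cbn [Rsum fold_right].
  rewrite plus_IZR, <- INR_IZR_INZ.
  assert (1 <= INR n) by (apply (le_INR 1); lia).
  pose proof (IH ltac:(lia)). pose proof (inv_succ_le_ln_sub (INR n) ltac:(lra)).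
  replace (1 + INR n) with (INR n + 1) by ring. lra.
Qed.

Lemma Rsum_harmonic_affine_le a b n : 0 <= a -> (1 <= n)%nat ->
  Rsum (Zseq 1 n) (fun j => a * / IZR j + b) <= a * (1 + ln (INR n)) + b * INR n.
Proof.
  intros Ha Hn. rewrite (Rsum_affine _ (fun j => / IZR j)), length_Zseq.
  apply Rplus_le_compat_r, Rmult_le_compat_l, harmonic_le_ln; assumption.
Qed.

Lemma ln_nonneg x : 1 <= x -> 0 <= ln x.
Proof.
  intros Hx. rewrite <- ln_1.
  destruct (Rle_lt_or_eq_dec 1 x Hx) as [Hlt|<-]; [left; apply ln_increasing|]; lra.
Qed.

Lemma ln_2_lt_1 : ln 2 < 1.
Proof.
  rewrite <- (ln_exp 1). apply ln_increasing; [lra|].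
  pose proof (exp_ineq1 1 ltac:(lra)). lra.
Qed.

Lemma ln_le_Rpower_div x eps : 0 < x -> 0 < eps -> ln x <= Rpower x eps / eps.
Proof.
  intros Hx He. unfold Rpower. pose proof (exp_ineq1_le (eps * ln x)).
  apply (Rmult_le_reg_l eps); [exact He|]. field_simplify; lra.
Qed.

Lemma one_le_Rpower x e : 1 <= x -> 0 <= e -> 1 <= Rpower x e.
Proof.
  intros Hx He. rewrite <- (Rpower_O x) at 1 by lra. apply Rle_Rpower; lra.
Qed.

Lemma N_ln_N_le_Rpower N eps a b : 1 <= N -> 0 < eps -> 0 <= a -> 0 <= b ->
  a * N + b * N * ln N <= (a + b / eps) * Rpower N (1 + eps).
Proof.
  intros HN He Ha Hb.
  rewrite Rpower_plus, Rpower_1 by lra.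
  pose proof (ln_le_Rpower_div N eps ltac:(lra) He) as Hln.
  pose proof (one_le_Rpower N eps HN ltac:(lra)) as Hp.
  set (p := Rpower N eps) in *.
  assert (Hb' : b * ln N <= b / eps * p)
    by (unfold Rdiv; rewrite Rmult_assoc, (Rmult_comm (/ eps)); apply Rmult_le_compat_l; assumption).
  assert (a * N * 1 <= a * N * p) by (apply Rmult_le_compat_l; nra).
  assert (N * (b * ln N) <= N * (b / eps * p)) by (apply Rmult_le_compat_l; lra).
  nra.
Qed.

(** * Products that are minus a square *)

Open Scope Z_scope.

Definition isqrt_div (n s : Z) : nat := Z.to_nat (Z.sqrt (n / s)).

Definition scaled_square_codes (N : nat) : list (Z * (Z * Z)) :=
  flat_map (fun s => let m := isqrt_div (Z.of_nat N) s in
                     map (pair s) (list_prod (Zseq 1 m) (Zseq 1 m)))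
    (Zseq 1 N).

Definition axis_pairs (N : nat) : list (Z * Z) :=
  map (pair 0) (Zrange N) ++ map (fun a => (a, 0)) (Zrange N).

Definition square_codes (N : nat) : list (Z * (Z * (Z * Z))) :=
  map (fun p => (0, (0, p))) (axis_pairs N) ++ list_prod [1; -1] (scaled_square_codes N).

Definition square_code (p : Z * Z) (q : Z * (Z * (Z * Z))) : Prop :=
  q = (0, (0, p)) \/
  exists g s c t, q = (g, (s, (c, t))) /\ (g = 1 \/ g = -1) /\
    fst p = g * s * (c * c) /\ snd p = - g * s * (t * t).

Lemma square_code_inj p p' q : square_code p q -> square_code p' q -> p = p'.
Proof.
  destruct p as [A B], p' as [A' B'].
  intros [->|[g [s [c [t [-> [Hg [EA EB]]]]]]]]
         [E|[g' [s' [c' [t' [E [Hg' [EA' EB']]]]]]]]; cbn in *;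
    injection E; intros; subst; [reflexivity|lia|lia|f_equal; lia].
Qed.

Lemma in_scaled_square_codes N s c t : 0 < s -> 0 < c -> 0 < t ->
  s * (c * c) <= Z.of_nat N -> s * (t * t) <= Z.of_nat N ->
  In (s, (c, t)) (scaled_square_codes N).
Proof.
  intros Hs Hc Ht HcN HtN.
  assert (Hsqrt : forall u, 0 < u -> s * (u * u) <= Z.of_nat N -> u <= Z.sqrt (Z.of_nat N / s)).
  { intros u Hu HuN. apply Z.sqrt_le_square; [apply Z.div_pos|..]; try lia.
    apply Z.div_le_lower_bound; lia. }
  pose proof (Hsqrt c Hc HcN). pose proof (Hsqrt t Ht HtN).
  apply in_flat_map. exists s. split.
  - apply in_Zseq. assert (s * 1 <= s * (c * c)) by (apply Z.mul_le_mono_nonneg_l; nia). lia.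
  - apply in_map, in_prod; apply in_Zseq; unfold isqrt_div;
      rewrite Z2Nat.id by apply Z.sqrt_nonneg; lia.
Qed.

Lemma count_neg_mul_square_le N :
  (count_box N (fun A B => is_rat_square (- (A * B))) <= length (square_codes N))%nat.
Proof.
  apply (count_box_le N _ square_code); [exact square_code_inj|].
  intros A B HA HB Hsq. apply int_square_of_rat_square in Hsq as [e He].
  destruct (Z.eq_dec A 0) as [->|HA0].
  { exists (0, (0, (0, B))). split; [|left; reflexivity].
    apply in_or_app; left. apply (in_map (fun p => (0, (0, p)))), in_or_app; left.
    apply in_map, in_Zrange, HB. }
  destruct (Z.eq_dec B 0) as [->|HB0].
  { exists (0, (0, (A, 0))). split; [|left; reflexivity].
    apply in_or_app; left. apply (in_map (fun p => (0, (0, p)))), in_or_app; right.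
    apply (in_map (fun a => (a, 0))), in_Zrange, HA. }
  destruct (pos_mul_square_form (Z.abs A) (Z.abs B) e) as [s [c [t [Hs [Hc [Ht [EA EB]]]]]]];
    [lia|lia|rewrite <- Z.abs_mul; nia|].
  exists (Z.sgn A, (s, (c, t))). split.
  - apply in_or_app; right. apply in_prod.
    + destruct (Z.sgn_spec A) as [[_ ->]|[[? _]|[_ ->]]];
        [left; reflexivity|lia|right; left; reflexivity].
    + apply in_scaled_square_codes; lia.
  - assert (HAB : A * B < 0).
    { pose proof (Z.square_nonneg e). pose proof (Z.neq_mul_0 A B). lia. }
    assert (Hsign : A < 0 < B \/ B < 0 < A)
      by (destruct (Z.lt_trichotomy A 0) as [?|[->|?]]; [left|lia|right]; nia).
    right. exists (Z.sgn A), s, c, t. cbn.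
    destruct (Z.sgn_spec A) as [[? ->]|[[? ->]|[? ->]]]; repeat split; lia || nia.
Qed.

Open Scope R_scope.

Lemma length_scaled_square_codes_le N : (1 <= N)%nat ->
  INR (length (scaled_square_codes N)) <= INR N * (1 + ln (INR N)).
Proof.
  intros HN. eapply Rle_trans.
  - apply (length_flat_map_le _ _ (fun s => INR N * / IZR s + 0)).
    intros s Hs. apply in_Zseq in Hs.
    rewrite length_map, length_prod, length_Zseq, mult_INR, Rplus_0_r.
    unfold isqrt_div. rewrite INR_IZR_INZ, Z2Nat.id, <- mult_IZR by apply Z.sqrt_nonneg.
    pose proof (Z.sqrt_spec (Z.of_nat N / s) ltac:(apply Z.div_pos; lia)) as [Hsqrt _].
    pose proof (Z.mul_div_le (Z.of_nat N) s ltac:(lia)) as Hdiv.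
    apply IZR_le in Hsqrt, Hdiv. rewrite mult_IZR, <- INR_IZR_INZ in Hdiv.
    assert (0 < IZR s) by (apply IZR_lt; lia).
    apply (Rmult_le_reg_l (IZR s)); [assumption|]. field_simplify; [|lra].
    eapply Rle_trans; [apply Rmult_le_compat_l; [lra|exact Hsqrt]|exact Hdiv].
  - pose proof (Rsum_harmonic_affine_le (INR N) 0 N (pos_INR N) HN). lra.
Qed.

Lemma count_neg_mul_square_bound N : (1 <= N)%nat ->
  INR (count_box N (fun A B => is_rat_square (- (A * B))%Z))
    <= 8 * INR N + 2 * INR N * ln (INR N).
Proof.
  intros HN. eapply Rle_trans; [apply le_INR, count_neg_mul_square_le|].
  unfold square_codes, axis_pairs.
  rewrite length_app, plus_INR, !length_map, length_app, !length_map, length_prod.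
  unfold Zrange. rewrite length_map, length_seq, !plus_INR, mult_INR, !mult_INR.
  pose proof (length_scaled_square_codes_le N HN).
  assert (1 <= INR N) by (apply (le_INR 1); lia).
  cbn [length INR]. lra.
Qed.

(** * Discriminants that are a square times D *)

Open Scope Z_scope.

(* [|s| (u - t)(u + t) <= 2 M]; the cases [s < 0], [x^2 <= 2 M] and [x^2 > 2 M]
   each give [((u - t) |x|)^2 <= 9 M^2]. *)
Lemma norm_form_gap s M x t u : s <> 0 -> 0 <= t <= u ->
  Z.abs (x * x - s * (t * t)) <= M -> Z.abs (x * x - s * (u * u)) <= M ->
  (u - t) * Z.abs x <= 3 * M.
Proof.
  intros Hs Htu Ht Hu.
  rewrite <- (Z.abs_square x) in Ht, Hu.
  assert (HX : 0 <= Z.abs x) by lia.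
  set (X := Z.abs x) in *. set (k := u - t).
  apply Z.square_le_simpl_nonneg; [lia|].
  assert (Hk : 0 <= k <= u) by lia.
  assert (Hkk : 0 <= k * k <= u * u) by nia.
  destruct (Z_lt_le_dec s 0) as [Hneg|Hpos].
  - assert (X * X <= M /\ u * u <= M) as [HXM HuM] by nia.
    assert (k * k * (X * X) <= M * M) by (apply Z.mul_le_mono_nonneg; lia).
    nia.
  - assert (Hdiff : s * (k * (u + t)) <= 2 * M)
      by (replace (k * (u + t)) with (u * u - t * t) by (unfold k; ring); lia).
    assert (Hkw : k * k <= k * (u + t)) by (apply Z.mul_le_mono_nonneg_l; lia).
    destruct (Z_le_gt_dec (X * X) (2 * M)) as [Hsmall|Hlarge].
    + assert (k * k <= 2 * M) by nia.
      assert (k * k * (X * X) <= 2 * M * (2 * M)) by (apply Z.mul_le_mono_nonneg; lia).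
      nia.
    + assert (HXw : X * X <= 2 * s * ((u + t) * (u + t))) by nia.
      assert (Hsq : s * (k * (u + t)) * (s * (k * (u + t))) <= 2 * M * (2 * M))
        by (apply Z.mul_le_mono_nonneg; nia).
      assert (s * (k * k * ((u + t) * (u + t))) <= 4 * M * M) by nia.
      assert (k * k * (X * X) <= 2 * (s * (k * k * ((u + t) * (u + t)))))
        by (replace (2 * (s * (k * k * ((u + t) * (u + t)))))
              with (k * k * (2 * s * ((u + t) * (u + t)))) by ring;
            apply Z.mul_le_mono_nonneg_l; lia).
      nia.
Qed.

Definition small_norm (s M x t : Z) : Prop := 0 <= t /\ Z.abs (x * x - s * (t * t)) <= M.

Definition window_center (s M x : Z) : Z := epsilon (inhabits 0) (small_norm s M x).

Definition window_radius (M x : Z) : Z := if Z.eq_dec x 0 then M else 3 * M / Z.abs x.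

Definition norm_window (s M x : Z) : list Z :=
  Zseq (window_center s M x - window_radius M x) (Z.to_nat (2 * window_radius M x + 1)).

Lemma small_norm_0_le s M t : s <> 0 -> small_norm s M 0 t -> t <= M.
Proof.
  intros Hs [Ht HM].
  rewrite Z.mul_0_r, Z.sub_0_l, Z.abs_opp, Z.abs_mul, (Z.abs_eq (t * t)) in HM by nia.
  assert (t <= t * t) by nia. assert (t * t <= Z.abs s * (t * t)) by nia. lia.
Qed.

Lemma in_norm_window s M x t : s <> 0 -> small_norm s M x t -> In t (norm_window s M x).
Proof.
  intros Hs Ht.
  assert (Hc : small_norm s M x (window_center s M x))
    by (unfold window_center; apply epsilon_spec; exists t; exact Ht).
  set (c := window_center s M x) in *.
  assert (HM : 0 <= M) by (destruct Ht; lia).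
  assert (Hr : 0 <= window_radius M x)
    by (unfold window_radius; destruct (Z.eq_dec x 0); [|apply Z.div_pos]; lia).
  assert (Hdist : Z.abs (t - c) <= window_radius M x).
  { unfold window_radius. destruct (Z.eq_dec x 0) as [->|Hx].
    - pose proof (small_norm_0_le s M t Hs Ht). pose proof (small_norm_0_le s M c Hs Hc).
      destruct Ht, Hc. lia.
    - apply Z.div_le_lower_bound; [lia|]. destruct Ht as [Ht0 Ht], Hc as [Hc0 Hc].
      destruct (Z_le_gt_dec t c).
      + pose proof (norm_form_gap s M x t c Hs ltac:(lia) Ht Hc). nia.
      + pose proof (norm_form_gap s M x c t Hs ltac:(lia) Hc Ht). nia. }
  unfold norm_window. apply in_Zseq. fold c. lia.
Qed.

Definition sym_range (n : nat) : list Z := 0 :: flat_map (fun j => [j; -j]) (Zseq 1 n).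

Lemma in_sym_range n x : Z.abs x <= Z.of_nat n -> In x (sym_range n).
Proof.
  intros Hx. destruct (Z.eq_dec x 0) as [->|Hx0]; [left; reflexivity|right].
  apply in_flat_map. exists (Z.abs x). split; [apply in_Zseq; lia|].
  destruct (Z.abs_spec x) as [[_ ->]|[_ ->]]; cbn; [left|right; left]; lia.
Qed.

Definition norm_codes (s M : Z) (n : nat) : list (Z * Z) :=
  flat_map (fun x => map (pair x) (norm_window s M x)) (sym_range n).

Definition disc (A B : Z) : Z := (A + B - 1) ^ 2 - 4 * A * B.

Definition disc_code (s : Z) (p q : Z * Z) : Prop :=
  fst q = fst p - snd p /\ disc (fst p) (snd p) = s * (snd q * snd q).

(* [disc A B = (A - B)^2 - 2 (A + B) + 1], so [A - B] and [disc A B] determine [(A, B)]. *)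
Lemma disc_code_inj s p p' q : disc_code s p q -> disc_code s p' q -> p = p'.
Proof.
  destruct p as [A B], p' as [A' B'], q as [x t].
  unfold disc_code, disc. cbn [fst snd]. rewrite !Z.pow_2_r. intros [Ex Et] [Ex' Et'].
  assert (A = B + x) as -> by lia. assert (A' = B' + x) as -> by lia.
  assert (B = B') as -> by nia. reflexivity.
Qed.

Lemma count_disc_square_le N D : ~ is_int_square D ->
  exists s, (count_box N (fun A B => is_rat_square (D * disc A B))
     <= length (norm_codes s (4 * Z.of_nat N + 1) (2 * N)))%nat.
Proof.
  intros Hns. assert (HD : D <> 0) by (intros ->; apply Hns; exists 0; reflexivity).
  destruct (mul_square_form D HD) as [s [Hs Hform]].
  exists s. apply (count_box_le N _ (disc_code s)); [apply disc_code_inj|].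
  intros A B HA HB Hsq. apply int_square_of_rat_square in Hsq as [e He].
  destruct (Hform (disc A B) e (eq_sym He)) as [t [Ht Edisc]].
  exists (A - B, t). split; [|split; [reflexivity|exact Edisc]].
  unfold norm_codes. apply in_flat_map. exists (A - B).
  split; [apply in_sym_range; lia|].
  apply in_map, in_norm_window; [exact Hs|]. split; [exact Ht|].
  rewrite <- Edisc. unfold disc.
  replace ((A - B) * (A - B) - ((A + B - 1) ^ 2 - 4 * A * B)) with (2 * (A + B) - 1) by ring.
  lia.
Qed.

Open Scope R_scope.

Lemma length_norm_window_le s M x : (0 <= M)%Z -> x <> 0%Z ->
  INR (length (norm_window s M x)) <= 6 * IZR M * / IZR (Z.abs x) + 1.
Proof.
  intros HM Hx. unfold norm_window, window_radius.
  destruct (Z.eq_dec x 0) as [|_]; [contradiction|].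
  rewrite length_Zseq, INR_IZR_INZ, Z2Nat.id by (pose proof (Z.div_pos (3 * M) (Z.abs x)); lia).
  pose proof (Z.mul_div_le (3 * M) (Z.abs x) ltac:(lia)) as Hdiv.
  apply IZR_le in Hdiv. rewrite !mult_IZR in Hdiv. rewrite plus_IZR, mult_IZR.
  assert (0 < IZR (Z.abs x)) by (apply IZR_lt; lia).
  assert (IZR (3 * M / Z.abs x) <= 3 * IZR M * / IZR (Z.abs x))
    by (apply (Rmult_le_reg_l (IZR (Z.abs x))); [assumption|]; field_simplify; lra).
  lra.
Qed.

Lemma length_norm_codes_le s M n : (0 <= M)%Z -> (1 <= n)%nat ->
  INR (length (norm_codes s M n))
    <= 2 * IZR M + 1 + 12 * IZR M * (1 + ln (INR n)) + 2 * INR n.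
Proof.
  intros HM Hn. unfold norm_codes, sym_range. cbn [flat_map].
  rewrite length_app, length_map, plus_INR.
  assert (Hcenter : INR (length (norm_window s M 0)) = 2 * IZR M + 1).
  { unfold norm_window, window_radius. destruct (Z.eq_dec 0 0) as [_|]; [|congruence].
    rewrite length_Zseq, INR_IZR_INZ, Z2Nat.id by lia. rewrite plus_IZR, mult_IZR. reflexivity. }
  assert (Hrest : INR (length (flat_map (fun x => map (pair x) (norm_window s M x))
                                 (flat_map (fun j => [j; (- j)%Z]) (Zseq 1 n))))
     <= Rsum (Zseq 1 n) (fun j => 12 * IZR M * / IZR j + 2)).
  { eapply Rle_trans.
    - apply (length_flat_map_le _ _ (fun x => 6 * IZR M * / IZR (Z.abs x) + 1)).
      intros x Hx. apply in_flat_map in Hx as [j [Hj Hx]]. apply in_Zseq in Hj.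
      rewrite length_map. apply length_norm_window_le; [exact HM|].
      destruct Hx as [<-|[<-|[]]]; lia.
    - rewrite Rsum_flat_map. apply Rsum_le. intros j Hj. apply in_Zseq in Hj.
      rewrite !Rsum_cons, Z.abs_opp, Z.abs_eq by lia. cbn. lra. }
  pose proof (Rsum_harmonic_affine_le (12 * IZR M) 2 n ltac:(apply IZR_le in HM; lra) Hn).
  lra.
Qed.

Lemma count_disc_square_bound N D : (1 <= N)%nat -> ~ is_int_square D ->
  INR (count_box N (fun A B => is_rat_square (D * disc A B)))
    <= 135 * INR N + 60 * INR N * ln (INR N).
Proof.
  intros HN HD.
  destruct (count_disc_square_le N D HD) as [s Hcount].
  eapply Rle_trans; [apply le_INR, Hcount|].
  eapply Rle_trans; [apply length_norm_codes_le; lia|].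
  assert (1 <= INR N) by (apply (le_INR 1); lia).
  rewrite mult_INR, plus_IZR, mult_IZR, <- INR_IZR_INZ.
  replace (INR 2) with 2 by (cbn; lra). rewrite ln_mult by lra.
  pose proof (ln_nonneg (INR N) ltac:(lra)). pose proof ln_2_lt_1.
  nra.
Qed.

Theorem lemma4p2 :
  forall eps : R, 0 < eps ->
  exists C : R, 0 < C /\
    forall N : nat, (1 <= N)%nat ->
      INR (count_box N (fun A B => is_rat_square (- (A * B))%Z))
        <= C * Rpower (INR N) (1 + eps)
      /\ forall D : Z, ~ is_int_square D ->
           INR (count_box N (fun A B =>
                  is_rat_square (D * ((A + B - 1) ^ 2 - 4 * A * B))%Z))
             <= C * Rpower (IZR (Z.abs D)) eps * Rpower (INR N) (1 + eps).
Proof.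
  intros eps Heps. exists (135 + 60 / eps).
  assert (0 < 60 / eps) by (apply Rdiv_lt_0_compat; lra).
  split; [lra|]. intros N HN.
  assert (H1N : 1 <= INR N) by (apply (le_INR 1); lia).
  pose proof (ln_nonneg (INR N) H1N).
  pose proof (N_ln_N_le_Rpower (INR N) eps 135 60 H1N Heps ltac:(lra) ltac:(lra)) as Hgrowth.
  split.
  - pose proof (count_neg_mul_square_bound N HN). nra.
  - intros D HD.
    assert (HD0 : (1 <= Z.abs D)%Z) by (destruct (Z.eq_dec D 0) as [->|]; [destruct HD; exists 0%Z|]; lia).
    pose proof (one_le_Rpower (IZR (Z.abs D)) eps (IZR_le _ _ HD0) ltac:(lra)).
    eapply Rle_trans; [exact (count_disc_square_bound N D HN HD)|].
    assert (0 <= (135 + 60 / eps) * Rpower (INR N) (1 + eps))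
      by (apply Rmult_le_pos; [lra|unfold Rpower; left; apply exp_pos]).
    nra.
Qed.
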